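(* Let $A$ and $B$ be finite groups, each with at least $2$ elements. For an integer $m\geq 1$, let $s_m$ be the number of elements $g\in A$ with $g^m=1$. For a divisor $n$ of $|B|$, let $d_n$ be the number of elements of $B$ of order $n$. Then $$a(A\wr B)=\sum_{m \mid |A|,\ n \mid |B|} \frac{m}{n}\left(\frac{s_m}{|A|}\right)^{n} d_{|B|/n}\,\tau\!\left(\frac{|A|}{m}\right),$$ where the sum runs over all positive divisors $m$ of $|A|$ and all positive divisors $n$ of $|B|$.
   Context: For a finite group $G$, the average order is $a(G)=\frac{1}{|G|}\sum_{g\in G}\mathrm{order}(g)$. For groups $A,B$, let $K=\prod_{b\in B}A$, on which $B$ acts by $x\cdot(\alpha_b)_b=(\alpha_{x^{-1}b})_b$ for $x\in B$; the wreath product $A\wr B$ is the semidirect product $K\rtimes B$ for this action. For a positive integer $n$, $\tau(n)=\prod_{p\mid n,\ p\text{ prime}}(1-p)$ (so $\tau(1)=1$). *)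

From HB Require Import structures.
From mathcomp Require Import all_boot all_order all_algebra all_fingroup.
Set Implicit Arguments. Unset Strict Implicit. Unset Printing Implicit Defensive.
Import GRing.Theory Num.Theory.

(* The wreath product A wr B = K x| B with K = prod_{b in B} A (functions
   B -> A), B acting by (x . alpha)_b = alpha_(x^-1 b). *)
Definition wreath (aT bT : finGroupType) : Type := ({ffun bT -> aT} * bT)%type.

Section Wreath.
Variables aT bT : finGroupType.
Local Open Scope group_scope.

HB.instance Definition _ := Finite.on (wreath aT bT).

Definition wr_act (x : bT) (al : {ffun bT -> aT}) : {ffun bT -> aT} :=
  [ffun b => al (x^-1 * b)].

Definition wr_mul (u v : wreath aT bT) : wreath aT bT :=
  ([ffun b => u.1 b * wr_act u.2 v.1 b], u.2 * v.2).
Definition wr_one : wreath aT bT := ([ffun => 1], 1).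
Definition wr_inv (u : wreath aT bT) : wreath aT bT :=
  (wr_act u.2^-1 [ffun b => (u.1 b)^-1], u.2^-1).

Lemma wr_mulA : associative wr_mul.
Proof.
case=> f b [g c] [h d]; rewrite /wr_mul /wr_act /=; congr (_, _); last exact: mulgA.
by apply/ffunP=> x; rewrite !ffunE invMg !mulgA.
Qed.

Lemma wr_mul1 : left_id wr_one wr_mul.
Proof.
case=> f b; rewrite /wr_mul /wr_act /=; congr (_, _); last exact: mul1g.
by apply/ffunP=> x; rewrite !ffunE invg1 !mul1g.
Qed.

Lemma wr_mulV : left_inverse wr_one wr_inv wr_mul.
Proof.
case=> f b; rewrite /wr_mul /wr_act /=; congr (_, _); last exact: mulVg.
by apply/ffunP=> x; rewrite !ffunE mulVg.
Qed.

HB.instance Definition _ :=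
  Finite_isGroup.Build (wreath aT bT) wr_mulA wr_mul1 wr_mulV.
End Wreath.

Definition avg_order (gT : finGroupType) : rat :=
  ((\sum_(g : gT) #[g]%g)%:R / #|gT|%:R)%R.

Definition tau (n : nat) : rat := (\prod_(p <- primes n) (1 - p%:R))%R.

Definition s_count (aT : finGroupType) (m : nat) : nat :=
  #|[set g : aT | (g ^+ m == 1)%g]|.

Definition d_count (bT : finGroupType) (n : nat) : nat :=
  #|[set g : bT | #[g]%g == n]|.

From HB Require Import structures.
From mathcomp Require Import all_boot all_order all_algebra all_fingroup cyclic.
From mathcomp Require Import ring.
Set Implicit Arguments.
Unset Strict Implicit.
Unset Printing Implicit Defensive.
Import GRing.Theory Num.Theory.

(* An element (al, x) of A wr B has order #[x] times the order of
   (al, x) ^+ #[x] = (N al, 1), where (N al) b = al b * al (x^-1 b) * ... is the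
   product of al along the coset <[x]> b.  The order of a base element be divides
   |A| and equals the sum of m * tau (|A| / m) over the divisors m of |A| with
   be ^+ m = 1, because \sum_(d | M) d * tau (M / d) = 1 for every M > 0.  Hence
   \sum_al #[(al, x)] = #[x] * \sum_m m * tau (|A| / m) * #{al | (N al) ^+ m = 1}.
   Along a coset the values of N al are cyclic rotations, hence conjugates, of one
   another, and overwriting al by N al on a transversal of the cosets of <[x]> is
   a bijection of A^B; so that count is s_m ^ k * |A| ^ (|B| - k) with
   k = |B| / #[x].  Grouping the x by k gives the formula. *)

Local Open Scope ring_scope.

Lemma divn_dvd_gt0 d N : (0 < N)%N -> (d %| N)%N -> (0 < N %/ d)%N.
Proof. by move=> N_gt0 /dvdn_div /(dvdn_gt0 N_gt0). Qed.

Section DivisorSums.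
Variable R : nmodType.
Implicit Types (F : nat -> R) (p K L N : nat).

Lemma eq_big_divisors N1 N2 (P : pred nat) F : (0 < N1)%N -> (0 < N2)%N ->
    (forall d, P d -> (d %| N1)%N = (d %| N2)%N) ->
  \sum_(d <- divisors N1 | P d) F d = \sum_(d <- divisors N2 | P d) F d.
Proof.
move=> N1_gt0 N2_gt0 eqN; rewrite -[LHS]big_filter -[RHS]big_filter; apply/perm_big/uniq_perm.
- exact/filter_uniq/divisors_uniq.
- exact/filter_uniq/divisors_uniq.
move=> d; rewrite !mem_filter -!dvdn_divisors //.
by case Pd: (P d) => //=; rewrite eqN.
Qed.

Lemma big_divisors_dvd L N F : (0 < N)%N -> (L %| N)%N ->
  \sum_(d <- divisors N | (L %| d)%N) F d = \sum_(e <- divisors (N %/ L)) F (L * e)%N.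
Proof.
move=> N_gt0 dvLN; have L_gt0 := dvdn_gt0 N_gt0 dvLN.
have NL_gt0 := divn_dvd_gt0 N_gt0 dvLN.
rewrite -[LHS]big_filter -(big_map (muln L) xpredT F); apply/perm_big/uniq_perm.
- exact/filter_uniq/divisors_uniq.
- by rewrite map_inj_uniq ?divisors_uniq // => a b /eqP; rewrite eqn_pmul2l // => /eqP.
move=> d; rewrite mem_filter -dvdn_divisors //; apply/andP/mapP.
  case=> /dvdnP[e ->] deN; exists e; last exact: mulnC.
  by rewrite -dvdn_divisors // -(dvdn_pmul2r L_gt0) divnK.
case=> e; rewrite -dvdn_divisors // => eNL ->; split; first exact: dvdn_mulr.
by rewrite -(divnK dvLN) mulnC dvdn_pmul2r.
Qed.

Lemma big_divisors_prime_mul p K F : prime p -> (0 < K)%N ->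
  \sum_(d <- divisors (p * K)) F d
    = \sum_(d <- divisors K | ~~ (p %| d)%N) F d + \sum_(e <- divisors K) F (p * e)%N.
Proof.
move=> p_pr K_gt0; have pK_gt0 : (0 < p * K)%N by rewrite muln_gt0 prime_gt0.
rewrite (bigID (dvdn p)) /= addrC big_divisors_dvd ?dvdn_mulr // mulKn ?prime_gt0 //.
congr (_ + _); apply: eq_big_divisors => // d p'd.
by rewrite Gauss_dvdr // coprime_sym prime_coprime.
Qed.

End DivisorSums.

Lemma tau1 : tau 1 = 1.
Proof. by rewrite /tau big_nil. Qed.

Lemma tau_prime_mul_dvd p n : prime p -> (0 < n)%N -> (p %| n)%N -> tau (p * n) = tau n.
Proof.
move=> p_pr n_gt0 pn; rewrite /tau; congr (\prod_(_ <- _) _).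
apply/eq_primes => q; rewrite !mem_primes muln_gt0 prime_gt0 // n_gt0 /=.
case q_pr: (prime q) => //=; apply/idP/idP; last exact: dvdn_mull.
by rewrite Euclid_dvdM // dvdn_prime2 // => /orP[/eqP-> |].
Qed.

Lemma tau_prime_mul_coprime p n : prime p -> (0 < n)%N -> ~~ (p %| n)%N ->
  tau (p * n) = (1 - p%:R) * tau n.
Proof.
move=> p_pr n_gt0 p'n; rewrite /tau (perm_big (p :: primes n)) ?big_cons //.
apply: uniq_perm; rewrite /= ?primes_uniq ?mem_primes ?p_pr ?n_gt0 ?(negbTE p'n) //.
move=> q; rewrite inE !mem_primes muln_gt0 prime_gt0 // n_gt0 /=.
case q_pr: (prime q) => /=; last by case: eqP q_pr => // ->; rewrite p_pr.
by rewrite Euclid_dvdM // dvdn_prime2.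
Qed.

Definition divisor_tau_sum N : rat := \sum_(d <- divisors N) d%:R * tau (N %/ d).

Lemma divisor_tau_sum_prime_mul p K : prime p -> (0 < K)%N ->
  divisor_tau_sum (p * K) = \sum_(d <- divisors K | ~~ (p %| d)%N) d%:R * tau (p * K %/ d)
                            + p%:R * divisor_tau_sum K.
Proof.
move=> p_pr K_gt0; rewrite /divisor_tau_sum big_divisors_prime_mul // big_distrr /=.
by congr (_ + _); apply: eq_bigr => e _; rewrite divnMl ?prime_gt0 // natrM mulrA.
Qed.

Section DivisorTauSumPrimeMul.
Variables (p K : nat).
Hypotheses (p_pr : prime p) (K_gt0 : (0 < K)%N).

Lemma divisor_tau_sum_prime_mul_coprime :
  ~~ (p %| K)%N -> divisor_tau_sum (p * K) = divisor_tau_sum K.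
Proof.
move=> p'K; rewrite divisor_tau_sum_prime_mul //.
have -> : \sum_(d <- divisors K | ~~ (p %| d)%N) d%:R * tau (p * K %/ d)
          = (1 - p%:R) * divisor_tau_sum K.
  rewrite big_distrr big_seq_cond [RHS]big_seq /=; apply: eq_big => [d | d /andP[dK _]].
    apply/andP/idP=> [[] // | dK]; split=> //; apply: contra p'K => /dvdn_trans; apply.
    by rewrite dvdn_divisors.
  rewrite -dvdn_divisors // in dK.
  rewrite -muln_divA // tau_prime_mul_coprime //; first exact: mulrCA.
  - exact: divn_dvd_gt0.
  - by apply: contra p'K => /dvdn_trans; apply; rewrite dvdn_div.
ring.
Qed.

Lemma divisor_tau_sum_prime_mul_dvd :
  (p %| K)%N -> divisor_tau_sum (p * K)
                = divisor_tau_sum K + p%:R * (divisor_tau_sum K - divisor_tau_sum (K %/ p)).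
Proof.
move=> pK; set K' := (K %/ p)%N; have defK : K = (p * K')%N by rewrite mulnC divnK.
have K'_gt0 : (0 < K')%N := divn_dvd_gt0 K_gt0 pK.
set S := \sum_(d <- divisors K | ~~ (p %| d)%N) d%:R * tau (K %/ d).
have expandK : divisor_tau_sum K = S + p%:R * divisor_tau_sum K'.
  rewrite {1}defK divisor_tau_sum_prime_mul // -defK; congr (_ + _).
  apply: eq_big_divisors => // d p'd.
  by rewrite defK Gauss_dvdr // coprime_sym prime_coprime.
rewrite divisor_tau_sum_prime_mul //.
have -> : \sum_(d <- divisors K | ~~ (p %| d)%N) d%:R * tau (p * K %/ d) = S.
  rewrite big_seq_cond [S]big_seq_cond; apply: eq_bigr => d /andP[dK p'd].
  rewrite -dvdn_divisors // in dK.
  rewrite -muln_divA // tau_prime_mul_dvd ?divn_dvd_gt0 //.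
  by move: pK; rewrite -{1}(divnK dK) mulnC Euclid_dvdM // (negbTE p'd).
rewrite expandK; ring.
Qed.

End DivisorTauSumPrimeMul.

Lemma divisor_tau_sum_eq1 N : (0 < N)%N -> divisor_tau_sum N = 1.
Proof.
elim/ltn_ind: N => N IH N_gt0; have [N_gt1 | N_le1] := ltnP 1 N; last first.
  have -> : N = 1%N by apply/eqP; rewrite eqn_leq N_le1.
  by rewrite /divisor_tau_sum big_seq1 tau1 mulr1.
have p_pr : prime (pdiv N) by rewrite pdiv_prime.
have defN : N = (pdiv N * (N %/ pdiv N))%N by rewrite mulnC divnK ?pdiv_dvd.
have ltKN : (N %/ pdiv N < N)%N by rewrite ltn_Pdiv ?prime_gt1.
have K_gt0 : (0 < N %/ pdiv N)%N by rewrite divn_dvd_gt0 ?pdiv_dvd.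
rewrite defN; have [pK | p'K] := boolP (pdiv N %| N %/ pdiv N)%N; last first.
  by rewrite divisor_tau_sum_prime_mul_coprime ?IH.
have K'_gt0 : (0 < N %/ pdiv N %/ pdiv N)%N by rewrite divn_dvd_gt0.
rewrite divisor_tau_sum_prime_mul_dvd // !IH ?subrr ?mulr0 ?addr0 //.
exact: leq_ltn_trans (leq_div _ _) ltKN.
Qed.

Lemma sum_multiples_tau L N : (0 < N)%N -> (L %| N)%N ->
  \sum_(m <- divisors N | (L %| m)%N) m%:R * tau (N %/ m) = L%:R.
Proof.
move=> N_gt0 LN.
rewrite big_divisors_dvd //; transitivity (L%:R * divisor_tau_sum (N %/ L)).
  by rewrite /divisor_tau_sum big_distrr; apply: eq_bigr => e _; rewrite divnMA natrM -mulrA.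
by rewrite divisor_tau_sum_eq1 ?mulr1 ?divn_dvd_gt0.
Qed.

Section CycleReps.
Variable gT : finGroupType.
Implicit Types x b t : gT.
Local Open Scope group_scope.

Definition cycle_reps x : {set gT} := [set t | repr (<[x]> :* t) == t].

Lemma repr_rcoset_mem x b : repr (<[x]> :* b) \in <[x]> :* b.
Proof. exact: mem_repr (rcoset_refl _ _). Qed.

Lemma repr_cycle_reps x b : repr (<[x]> :* b) \in cycle_reps x.
Proof. by rewrite inE (rcoset_eqP (repr_rcoset_mem x b)). Qed.

Lemma cycle_reps_cover x b : exists i, exists2 t, t \in cycle_reps x & b = x ^+ i * t.
Proof.
have /rcosetP[a xa repr_b] := repr_rcoset_mem x b.
have /cycleP[i xi] : a^-1 \in <[x]> by rewrite groupV.
by exists i, (repr (<[x]> :* b)); rewrite ?repr_cycle_reps // repr_b -xi mulKg.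
Qed.

Lemma cycle_reps_notin x t j : t \in cycle_reps x -> (0 < j < #[x])%N ->
  (x ^+ j)^-1 * t \notin cycle_reps x.
Proof.
move=> reps_t /andP[j_gt0 ltjx]; apply/negP; rewrite !inE in reps_t *.
have -> : <[x]> :* ((x ^+ j)^-1 * t) = <[x]> :* t.
  by apply/rcoset_eqP/rcosetP; exists (x ^+ j)^-1; rewrite // groupV mem_cycle.
rewrite (eqP reps_t) => /eqP t_eq.
have : (x ^+ j)^-1 = 1 by apply: (mulIg t); rewrite mul1g -t_eq.
move/eqP; rewrite invg_eq1 -order_dvdn => /(dvdn_leq j_gt0).
by rewrite leqNgt ltjx.
Qed.

Lemma card_cycle_reps x : (#|cycle_reps x| * #[x])%N = #|gT|.
Proof.
have -> : #|cycle_reps x| = #|rcosets <[x]> [set: gT]|.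
  rewrite -(card_in_imset (f := fun t => <[x]> :* t)); last first.
    by move=> t1 t2; rewrite !inE => /eqP rep1 /eqP rep2 eq12; rewrite -rep1 -rep2 eq12.
  apply: eq_card => C; apply/imsetP/imsetP => [[t _ ->] | [b _ ->]].
    by exists t; rewrite ?rcosetE ?inE.
  exists (repr (<[x]> :* b)); first exact: repr_cycle_reps.
  by rewrite rcosetE; apply/esym/rcoset_eqP/repr_rcoset_mem.
by rewrite mulnC -cardsT -(Lagrange (subsetT <[x]>)).
Qed.

End CycleReps.

Lemma expg_mulC_eq1 (gT : finGroupType) (a r : gT) m :
  ((a * r) ^+ m == 1)%g = ((r * a) ^+ m == 1)%g.
Proof.
have -> : (r * a = (a * r) ^ a)%g by rewrite conjgE !mulgA mulVg mul1g.
by rewrite -conjXg conjg_eq1.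
Qed.

Section WreathOrder.
Variables aT bT : finGroupType.
Local Notation W := (wreath aT bT).
Local Notation base := {ffun bT -> aT}.
Implicit Types (al be : base) (x y b : bT).
Local Open Scope group_scope.

Lemma wr_mulE al x be y :
  ((al, x) : W) * (be, y) = ([ffun b => al b * be (x^-1 * b)], x * y).
Proof. by rewrite /mulg /= /wr_mul /wr_act /=; congr pair; apply/ffunP => b; rewrite !ffunE. Qed.

Lemma wr_oneE : (1 : W) = ([ffun => 1], 1).
Proof. by []. Qed.

Definition wr_base_exp k al x : base := [ffun b => \prod_(j < k) al ((x ^+ j)^-1 * b)].

Lemma wr_expgE al x k : ((al, x) : W) ^+ k = (wr_base_exp k al x, x ^+ k).
Proof.
elim: k => [|k IH].
  by rewrite expg0 wr_oneE; congr pair; apply/ffunP => b; rewrite !ffunE big_ord0.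
rewrite expgSr IH wr_mulE expgSr; congr pair.
by apply/ffunP => b; rewrite !ffunE big_ord_recr.
Qed.

Definition wr_norm al x : base := wr_base_exp #[x] al x.

Lemma order_wreath al x : #[(al, x) : W] = (#[x] * #[(wr_norm al x, 1%g) : W])%N.
Proof.
have norm_def : ((al, x) : W) ^+ #[x] = (wr_norm al x, 1) by rewrite wr_expgE expg_order.
have x_dvd : (#[x] %| #[(al, x) : W])%N.
  by rewrite order_dvdn; have := expg_order ((al, x) : W); rewrite wr_expgE => -[_ ->].
by rewrite -norm_def orderXdiv // mulnC divnK.
Qed.

Lemma wr_base_exp1 k be : wr_base_exp k be 1 = [ffun b => be b ^+ k].
Proof.
apply/ffunP => b; rewrite !ffunE; elim: k => [|k IH]; first by rewrite big_ord0.
by rewrite big_ord_recr /= IH expg1n invg1 mul1g expgSr.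
Qed.

Lemma order_base_dvdn be m : (#[(be, 1%g) : W] %| m)%N = [forall b, be b ^+ m == 1].
Proof.
rewrite order_dvdn wr_expgE wr_base_exp1 expg1n wr_oneE.
apply/eqP/forallP => [[Em] b | Em].
  by have := congr1 (fun f : base => f b) Em; rewrite !ffunE => ->.
by congr pair; apply/ffunP => b; rewrite !ffunE; apply/eqP.
Qed.

Lemma order_base_tau be :
  (#[(be, 1%g) : W]%:R : rat)
    = (\sum_(m <- divisors #|aT| | [forall b, (be b ^+ m == 1)%g]) m%:R * tau (#|aT| %/ m))%R.
Proof.
have A_gt0 : (0 < #|aT|)%N by rewrite -cardsT cardG_gt0.
have dvd_card : (#[(be, 1%g) : W] %| #|aT|)%N.
  by rewrite order_base_dvdn; apply/forallP => b; rewrite -cardsT expg_cardG ?inE.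
rewrite -(sum_multiples_tau A_gt0 dvd_card); apply: eq_bigl => m.
by rewrite order_base_dvdn.
Qed.

(* wr_norm al x (x * b) is a cyclic rotation, hence a conjugate, of wr_norm al x b. *)
Lemma wr_norm_mull_expg_eq1 al x b m :
  (wr_norm al x (x * b) ^+ m == 1) = (wr_norm al x b ^+ m == 1).
Proof.
have [n ox] : exists n, #[x] = n.+1 by exists #[x].-1; rewrite prednK ?order_gt0.
have xn : (x ^+ n)^-1 = x by apply/eqP; rewrite eq_invg_mul -expgSr -ox expg_order.
rewrite /wr_norm /wr_base_exp !ffunE ox big_ord_recl big_ord_recr /= xn expg0 invg1 mul1g.
have -> : \prod_(j < n) al ((x ^+ lift ord0 j)^-1 * (x * b))
          = \prod_(j < n) al ((x ^+ j)^-1 * b).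
  by apply: eq_bigr => j _; rewrite lift0 expgS invMg -mulgA mulKg.
exact: expg_mulC_eq1.
Qed.

Lemma wr_norm_cycle_expg_eq1 al x i b m :
  (wr_norm al x (x ^+ i * b) ^+ m == 1) = (wr_norm al x b ^+ m == 1).
Proof.
elim: i => [|i IH]; first by rewrite expg0 mul1g.
by rewrite expgS -mulgA wr_norm_mull_expg_eq1 IH.
Qed.

Definition norm_on_reps x al : base :=
  [ffun b => if b \in cycle_reps x then wr_norm al x b else al b].

(* At a representative t, norm_on_reps x al t is al t times values of al off the
   transversal. *)
Lemma norm_on_reps_inj x : injective (norm_on_reps x).
Proof.
move=> al1 al2 eq12; apply/ffunP => b.
have eq12_at c : norm_on_reps x al1 c = norm_on_reps x al2 c by rewrite eq12.
have [reps_b | reps'b] := boolP (b \in cycle_reps x); last first.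
  by have := eq12_at b; rewrite /norm_on_reps !ffunE (negbTE reps'b).
have [n ox] : exists n, #[x] = n.+1 by exists #[x].-1; rewrite prednK ?order_gt0.
have := eq12_at b; rewrite /norm_on_reps /wr_norm /wr_base_exp !ffunE reps_b.
rewrite ox !big_ord_recl expg0 invg1 !mul1g.
rewrite (eq_bigr (fun j : 'I_n => al2 ((x ^+ lift ord0 j)^-1 * b))) => [/mulIg // | j _].
have := eq12_at ((x ^+ lift ord0 j)^-1 * b).
by rewrite /norm_on_reps !ffunE (negbTE (cycle_reps_notin reps_b _)) // lift0 ox; exact: ltn_ord.
Qed.

Lemma forall_wr_norm_expg_eq1 x al m :
  [forall b, wr_norm al x b ^+ m == 1]
    = [forall b in cycle_reps x, norm_on_reps x al b ^+ m == 1].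
Proof.
apply/forallP/forall_inP => [norm_m b reps_b | norm_m b]; first by rewrite ffunE reps_b.
have [i [t reps_t ->]] := cycle_reps_cover x b.
by rewrite wr_norm_cycle_expg_eq1; have := norm_m t reps_t; rewrite ffunE reps_t.
Qed.

Lemma card_ffun_expg_eq1_on (T : {set bT}) m :
  #|[set ga : base | [forall b in T, ga b ^+ m == 1]]|
    = (s_count aT m ^ #|T| * #|aT| ^ (#|bT| - #|T|))%N.
Proof.
pose F b : pred aT := if b \in T then [pred a | a ^+ m == 1] else predT.
have -> : #|[set ga : base | [forall b in T, ga b ^+ m == 1]]| = #|family F|.
  apply: eq_card => ga; rewrite inE; apply/forall_inP/familyP => [ga_m b | ga_m b T_b].
    by rewrite /F; case: ifP => // /ga_m.
  by have := ga_m b; rewrite /F T_b.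
rewrite card_family foldrE big_map big_enum /= (bigID (mem T)) /=.
rewrite (eq_bigr (fun=> s_count aT m)) => [|b T_b]; last first.
  by rewrite /F T_b /s_count; apply: eq_card => a; rewrite !inE.
rewrite [X in (_ * X)%N](eq_bigr (fun=> #|aT|)) => [|b T'b]; last first.
  by rewrite /F (negbTE T'b); apply: eq_card.
by rewrite !prod_nat_const -(cardC T) addKn.
Qed.

Lemma card_wr_norm_expg_eq1 x m :
  #|[set al : base | [forall b, wr_norm al x b ^+ m == 1]]|
    = (s_count aT m ^ #|cycle_reps x| * #|aT| ^ (#|bT| - #|cycle_reps x|))%N.
Proof.
rewrite -card_ffun_expg_eq1_on -(card_imset _ (@norm_on_reps_inj x)).
apply: eq_card => ga; have [inv _ invK] := injF_bij (@norm_on_reps_inj x).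
rewrite inE; apply/imsetP/idP => [[al] | ga_m].
  by rewrite inE forall_wr_norm_expg_eq1 => ? ->.
by exists (inv ga); rewrite ?invK // inE forall_wr_norm_expg_eq1 invK.
Qed.

End WreathOrder.

Section WreathAverage.
Variables aT bT : finGroupType.
Local Notation W := (wreath aT bT).
Local Notation base := {ffun bT -> aT}.
Local Open Scope ring_scope.

Lemma sum_order_fiber x :
  (\sum_(al : base) #[(al, x) : W]%g)%:R
    = #[x]%g%:R * \sum_(m <- divisors #|aT|) m%:R * tau (#|aT| %/ m)
         * (s_count aT m ^ #|cycle_reps x| * #|aT| ^ (#|bT| - #|cycle_reps x|))%N%:R :> rat.
Proof.
rewrite natr_sum.
under eq_bigr => al _ do rewrite order_wreath natrM order_base_tau big_mkcond.
rewrite -big_distrr exchange_big /=; congr (_ * _); apply: eq_bigr => m _.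
rewrite -big_mkcond -(@card_wr_norm_expg_eq1 aT bT x m) mulr_natr -sumr_const.
by apply: eq_bigl => al; rewrite inE.
Qed.

Lemma avg_order_fiber x :
  (\sum_(al : base) #[(al, x) : W]%g)%:R / (#|aT| ^ #|bT| * #|bT|)%:R
    = \sum_(m <- divisors #|aT|) m%:R / (#|bT| %/ #[x]%g)%:R
        * ((s_count aT m)%:R / #|aT|%:R) ^+ (#|bT| %/ #[x]%g) * tau (#|aT| %/ m) :> rat.
Proof.
have k_def : (#|bT| %/ #[x]%g)%N = #|cycle_reps x|.
  by rewrite -(card_cycle_reps x) mulnK ?order_gt0.
rewrite k_def sum_order_fiber mulrAC mulr_sumr; apply: eq_bigr => m _.
set k := #|cycle_reps x|; set o := #[x]%g.
have o_gt0 : (0 < o)%N := order_gt0 x.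
have k_gt0 : (0 < k)%N.
  by have := cardG_gt0 [set: bT]; rewrite cardsT -(card_cycle_reps x) muln_gt0 => /andP[].
have A_gt0 : (0 < #|aT|)%N by rewrite -cardsT cardG_gt0.
have k_le_B : (k <= #|bT|)%N by rewrite -(card_cycle_reps x) leq_pmulr.
have -> : (#|aT| ^ #|bT| * #|bT| = #|aT| ^ (#|bT| - k) * #|aT| ^ k * (k * o))%N.
  by rewrite -expnD subnK // card_cycle_reps.
rewrite !natrM !natrX expr_div_n; field.
by rewrite !pnatr_eq0 -!lt0n o_gt0 k_gt0 !expf_neq0 // pnatr_eq0 -lt0n.
Qed.

End WreathAverage.

Lemma sum_by_cycle_index (gT : finGroupType) (R : nmodType) (F : nat -> R) :
  \sum_(x : gT) F (#|gT| %/ #[x]%g)%N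
    = \sum_(n <- divisors #|gT|) F n *+ d_count gT (#|gT| %/ n).
Proof.
have G_gt0 : (0 < #|gT|)%N by rewrite -cardsT cardG_gt0.
under [RHS]eq_bigr => n _ do rewrite /d_count -sumr_const big_mkcond.
rewrite exchange_big /=; apply: eq_bigr => x _.
have o_dvd : (#[x]%g %| #|gT|)%N by rewrite -cardsT order_dvdG ?inE.
have cofactorK : (#|gT| %/ (#|gT| %/ #[x]%g))%N = #[x]%g by rewrite divnA // mulKn.
rewrite (bigD1_seq (#|gT| %/ #[x]%g)%N) ?divisors_uniq -?dvdn_divisors ?dvdn_div //=.
rewrite inE cofactorK eqxx big1_seq ?addr0 // => n /andP[n_neq].
rewrite inE -dvdn_divisors // => n_dvd; case: eqP => // o_def.
by move: n_neq; rewrite o_def divnA // mulKn ?eqxx // dvdn_gt0.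
Qed.

Theorem theorem1 (aT bT : finGroupType)
    (hA : (1 < #|aT|)%N) (hB : (1 < #|bT|)%N) :
  avg_order (wreath aT bT) =
  \sum_(m <- divisors #|aT|) \sum_(n <- divisors #|bT|)
     (m%:R / n%:R) * ((s_count aT m)%:R / #|aT|%:R) ^+ n
       * (d_count bT (#|bT| %/ n))%:R * tau (#|aT| %/ m).
Proof.
have card_W : #|{: wreath aT bT}| = (#|aT| ^ #|bT| * #|bT|)%N.
  by rewrite card_prod card_ffun.
have sum_W : (\sum_(g : wreath aT bT) #[g]%g
              = \sum_(x : bT) \sum_(al : {ffun bT -> aT}) #[(al, x) : wreath aT bT]%g)%N.
  by rewrite exchange_big pair_big; apply: eq_bigr => -[].
rewrite /avg_order sum_W card_W natr_sum mulr_suml.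
under eq_bigr => x _ do rewrite avg_order_fiber.
rewrite (@sum_by_cycle_index bT _ (fun n => \sum_(m <- divisors #|aT|) m%:R / n%:R
           * ((s_count aT m)%:R / #|aT|%:R) ^+ n * tau (#|aT| %/ m))) exchange_big /=.
apply: eq_bigr => n _; rewrite -sumrMnl.
by apply: eq_bigr => m _; rewrite [RHS]mulrAC; apply/esym/mulr_natr.
Qed.
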